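(* Every lens that is both an epimorphism and a monomorphism in $\mathbf{Lens}$ is an isomorphism in $\mathbf{Lens}$.
   Context: A lens $F\colon \mathbf{A}\to\mathbf{B}$ between small categories consists of a functor $F\colon\mathbf{A}\to\mathbf{B}$ (the get functor) together with, for each object $A$ of $\mathbf{A}$, a function $\varphi_{F,A}$ from the set of morphisms of $\mathbf{B}$ with domain $FA$ to the set of morphisms of $\mathbf{A}$ with domain $A$, such that: $F(\varphi_{F,A}b)=b$; $\varphi_{F,A}(\mathrm{id}_{FA})=\mathrm{id}_A$; and $\varphi_{F,A}(b'\circ b)=\varphi_{F,A'}(b')\circ\varphi_{F,A}(b)$ whenever $b$ has domain $FA$, $A'$ is the codomain of $\varphi_{F,A}b$, and $b'$ has domain $FA'$. $\mathbf{Lens}$ is the category of small categories and lenses, with composite of $F\colon\mathbf{A}\to\mathbf{B}$, $G\colon\mathbf{B}\to\mathbf{C}$ having get functor $G\circ F$ and puts $\varphi_{G\circ F,A}(c)=\varphi_{F,A}(\varphi_{G,FA}(c))$. *)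

Record Category : Type := {
  Ob :> Type;
  Hom : Ob -> Ob -> Type;
  idm : forall x : Ob, Hom x x;
  comp : forall x y z : Ob, Hom y z -> Hom x y -> Hom x z;
  comp_id_l : forall x y (f : Hom x y), comp x y y (idm y) f = f;
  comp_id_r : forall x y (f : Hom x y), comp x x y f (idm x) = f;
  comp_assoc : forall x y z w (f : Hom x y) (g : Hom y z) (h : Hom z w),
      comp x z w h (comp x y z g f) = comp x y w (comp y z w h g) f
}.

Arguments Hom {_} _ _.
Arguments idm {_} _.
Arguments comp {_ _ _ _} _ _.

Record Functor (A B : Category) : Type := {
  fobj :> Ob A -> Ob B;
  fmap : forall x y : Ob A, Hom x y -> Hom (fobj x) (fobj y);
  fmap_id : forall x, fmap x x (idm x) = idm (fobj x);
  fmap_comp : forall x y z (f : Hom x y) (g : Hom y z),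
      fmap x z (comp g f) = comp (fmap y z g) (fmap x y f)
}.

Arguments fobj {_ _} _ _.
Arguments fmap {_ _} _ {_ _} _.
Arguments fmap_id {_ _} _ _.
Arguments fmap_comp {_ _} _ {_ _ _} _ _.

Definition out_arr (C : Category) (x : Ob C) : Type := {y : Ob C & Hom x y}.

(* A lens A -> B: a get functor F together with puts
   phi_A : {morphisms of B with domain F A} -> {morphisms of A with domain A}
   satisfying:
   - F (phi_A b) = b  (equality of morphisms with domain F A),
   - phi_A (id_{FA}) = id_A,
   - phi_A (b' o b) = phi_{A'} b' o phi_A b, where A' is the codomain of
     phi_A b and b' has domain F A'.  In the last law, b is written as
     F (phi_A b), which is literally equal to b by the first law; this avoids
     a type-level transport along the equation F A' = cod b. *)
Record Lens (A B : Category) : Type := {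
  lget :> Functor A B;
  lput : forall a : Ob A, out_arr B (lget a) -> out_arr A a;
  lput_get : forall a (b : out_arr B (lget a)),
      existT (fun y => Hom (lget a) y)
             (lget (projT1 (lput a b))) (fmap lget (projT2 (lput a b))) = b;
  lput_id : forall a,
      lput a (existT _ (lget a) (idm (lget a))) = existT _ a (idm a);
  lput_comp : forall a (b : out_arr B (lget a)) (z : Ob B)
      (b' : Hom (lget (projT1 (lput a b))) z),
      lput a (existT _ z (comp b' (fmap lget (projT2 (lput a b))))) =
      existT _ (projT1 (lput (projT1 (lput a b)) (existT _ z b')))
               (comp (projT2 (lput (projT1 (lput a b)) (existT _ z b')))
                     (projT2 (lput a b)))
}.

Arguments lget {_ _} _.
Arguments lput {_ _} _ _ _.
Arguments lput_get {_ _} _ _ _.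
Arguments lput_id {_ _} _ _.
Arguments lput_comp {_ _} _ _ _ _ _.

Definition functor_id (A : Category) : Functor A A.
Proof.
  refine {| fobj := fun x => x; fmap := fun x y f => f |}.
  - intros; reflexivity.
  - intros; reflexivity.
Defined.

Definition functor_comp {A B C : Category} (F : Functor A B) (G : Functor B C)
  : Functor A C.
Proof.
  refine {| fobj := fun x => G (F x);
            fmap := fun x y f => fmap G (fmap F f) |}.
  - intros x. rewrite fmap_id, fmap_id. reflexivity.
  - intros x y z f g. rewrite fmap_comp, fmap_comp. reflexivity.
Defined.

Definition lens_id (A : Category) : Lens A A.
Proof.
  refine {| lget := functor_id A; lput := fun a b => b |}.
  - intros a [y b]. reflexivity.
  - intros a. reflexivity.
  - intros a [y b] z b'. reflexivity.
Defined.

Lemma lput_comp_gen {B C : Category} (G : Lens B C) (x : Ob B)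
  (c : out_arr C (G x)) (y1 : Ob B) (h : Hom x y1)
  (H : existT (fun y => Hom x y) y1 h = lput G x c)
  (z : Ob C) (b' : Hom (G y1) z) :
  lput G x (existT _ z (comp b' (fmap (lget G) h))) =
  existT _ (projT1 (lput G y1 (existT _ z b')))
           (comp (projT2 (lput G y1 (existT _ z b'))) h).
Proof.
  pose proof (lput_comp G x c) as K.
  rewrite <- H in K. simpl in K. apply K.
Qed.

Lemma sig_eta {X : Type} {P : X -> Type} (s : {x : X & P x}) :
  existT P (projT1 s) (projT2 s) = s.
Proof. destruct s; reflexivity. Qed.

Definition lens_comp {A B C : Category} (F : Lens A B) (G : Lens B C)
  : Lens A C.
Proof.
  refine {| lget := functor_comp (lget F) (lget G);
            lput := fun a c => lput F a (lput G (F a) c) |}.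
  - intros a c. simpl.
    pose proof (lput_get F a (lput G (F a) c)) as E.
    pose proof (f_equal (fun s : out_arr B (F a) =>
       existT (fun y => Hom (G (F a)) y) (G (projT1 s)) (fmap (lget G) (projT2 s))) E)
      as E2.
    simpl in E2. rewrite E2. apply (lput_get G (F a) c).
  - intros a. simpl.
    rewrite (lput_id G (F a)). apply (lput_id F a).
  - intros a c z b'. simpl.
    rewrite (lput_comp_gen G (F a) c _ _ (lput_get F a (lput G (F a) c)) z b').
    etransitivity; [exact (lput_comp F a (lput G (F a) c) _
               (projT2 (lput G (F (projT1 (lput F a (lput G (F a) c))))
                          (existT _ z b'))))|].
    rewrite sig_eta. reflexivity.
Defined.

Definition lens_epi {A B : Category} (F : Lens A B) : Prop :=
  forall (C : Category) (G H : Lens B C),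
    lens_comp F G = lens_comp F H -> G = H.

Definition lens_mono {A B : Category} (F : Lens A B) : Prop :=
  forall (C : Category) (G H : Lens C A),
    lens_comp G F = lens_comp H F -> G = H.

Definition lens_iso {A B : Category} (F : Lens A B) : Prop :=
  exists G : Lens B A, lens_comp F G = lens_id A /\ lens_comp G F = lens_id B.

From Stdlib Require Import Bool ProofIrrelevance FunctionalExtensionality ClassicalEpsilon Eqdep.

(* A mono lens is injective on objects and its puts invert F on the arrows out of
   each object: test F against the two projections out of its kernel pair
   A x_B A, which are lenses (lenses are stable under pullback along functors) with
   equal composites with F.  An epi lens is surjective on objects: its image is
   closed under outgoing arrows, so the copresheaf on B that is constantly bool,
   with an arrow acting as the identity except when it enters the image from
   outside, where it is constantly false, has two global elements (the indicator
   of the complement of the image, and false) that agree exactly on the image;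
   the corresponding sections of its category of elements are lenses equalised by
   F.  Finally, a lens that is bijective on objects and on outgoing arrows is an
   isomorphism of categories, and the inverse functor with puts given by F is an
   inverse lens. *)

(* All arrows of C in one type, so that arrows whose ends are only propositionally
   equal can still be compared. *)
Definition arrow (C : Category) : Type := {x : Ob C & out_arr C x}.

Definition out_arrow {C : Category} {x : Ob C} (s : out_arr C x) : arrow C :=
  existT _ x s.

Definition arrow_of {C : Category} {x y : Ob C} (f : Hom x y) : arrow C :=
  out_arrow (existT _ y f).

Lemma arrow_of_projT2 {C : Category} {x : Ob C} (s : out_arr C x) :
  arrow_of (projT2 s) = out_arrow s.
Proof. now destruct s. Qed.

Lemma out_arrow_inj {C : Category} {x : Ob C} (s t : out_arr C x) :
  out_arrow s = out_arrow t -> s = t.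
Proof. apply inj_pair2. Qed.

Lemma arrow_of_ends {C : Category} {x y x' y' : Ob C} (f : Hom x y) (g : Hom x' y') :
  arrow_of f = arrow_of g -> x = x' /\ y = y'.
Proof.
  intros H. split.
  - exact (f_equal (@projT1 _ _) H).
  - exact (f_equal (fun r : arrow C => projT1 (projT2 r)) H).
Qed.

Lemma arrow_of_inj {C : Category} {x y : Ob C} (f g : Hom x y) :
  arrow_of f = arrow_of g -> f = g.
Proof. intros H. exact (inj_pair2 _ _ _ _ _ (out_arrow_inj _ _ H)). Qed.

Lemma arrow_of_comp {C : Category} {x y z x' y' z' : Ob C}
  (f : Hom x y) (g : Hom y z) (f' : Hom x' y') (g' : Hom y' z') :
  arrow_of f = arrow_of f' -> arrow_of g = arrow_of g' ->
  arrow_of (comp g f) = arrow_of (comp g' f').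
Proof.
  intros Hf Hg.
  destruct (arrow_of_ends _ _ Hf) as [<- <-], (arrow_of_ends _ _ Hg) as [_ <-].
  apply arrow_of_inj in Hf, Hg. now subst.
Qed.

Lemma arrow_of_fmap {A B : Category} (F : Functor A B) {x y x' y' : Ob A}
  (f : Hom x y) (f' : Hom x' y') :
  arrow_of f = arrow_of f' -> arrow_of (fmap F f) = arrow_of (fmap F f').
Proof.
  intros H. destruct (arrow_of_ends _ _ H) as [<- <-].
  apply arrow_of_inj in H. now subst.
Qed.

Definition out_cast {C : Category} {x x' : Ob C} (e : x = x') (s : out_arr C x) :
  out_arr C x' := eq_rect x (out_arr C) s x' e.

Lemma out_arrow_cast {C : Category} {x x' : Ob C} (e : x = x') (s : out_arr C x) :
  out_arrow (out_cast e s) = out_arrow s.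
Proof. now destruct e. Qed.

Lemma out_cast_idm {C : Category} {x x' : Ob C} (e : x = x') :
  out_cast e (existT _ x (idm x)) = existT _ x' (idm x').
Proof. now destruct e. Qed.

Lemma arrow_of_cast_cod {C : Category} {x y y' : Ob C} (e : y = y') (f : Hom x y) :
  arrow_of (eq_rect y (Hom x) f y' e) = arrow_of f.
Proof. now destruct e. Qed.

Definition fmap_out {A B : Category} (F : Functor A B) {a : Ob A} (s : out_arr A a) :
  out_arr B (F a) := existT _ (F (projT1 s)) (fmap F (projT2 s)).

Lemma out_arrow_fmap_out {A B : Category} (F : Functor A B) {a : Ob A} (s : out_arr A a) :
  out_arrow (fmap_out F s) = arrow_of (fmap F (projT2 s)).
Proof. reflexivity. Qed.

Lemma fmap_out_lput {A B : Category} (F : Lens A B) a (b : out_arr B (F a)) :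
  fmap_out F (lput F a b) = b.
Proof. exact (lput_get F a b). Qed.

Lemma lput_arrow {A B : Category} (F : Lens A B) {a a' : Ob A}
  (b : out_arr B (F a)) (b' : out_arr B (F a')) :
  a = a' -> out_arrow b = out_arrow b' -> out_arrow (lput F a b) = out_arrow (lput F a' b').
Proof. intros <- H. now rewrite (out_arrow_inj _ _ H). Qed.

Lemma lput_comp_arrow {A B : Category} (F : Lens A B) a (b : out_arr B (F a))
  (d : out_arr B (F a)) (e : out_arr B (F (projT1 (lput F a b)))) :
  out_arrow d = arrow_of (comp (projT2 e) (fmap F (projT2 (lput F a b)))) ->
  lput F a d =
  existT _ (projT1 (lput F (projT1 (lput F a b)) e))
           (comp (projT2 (lput F (projT1 (lput F a b)) e)) (projT2 (lput F a b))).
Proof.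
  intros H. rewrite (out_arrow_inj _ _ H). destruct e as [z b'].
  apply lput_comp.
Qed.

Lemma lens_eq {X Y : Category} (L1 L2 : Lens X Y) :
  (forall x y (f : Hom x y), arrow_of (fmap L1 f) = arrow_of (fmap L2 f)) ->
  (forall a c1 c2, out_arrow c1 = out_arrow c2 -> lput L1 a c1 = lput L2 a c2) ->
  L1 = L2.
Proof.
  destruct L1 as [[o1 m1 i1 k1] p1 g1 d1 c1], L2 as [[o2 m2 i2 k2] p2 g2 d2 c2]; simpl.
  intros Hmap Hput.
  assert (o1 = o2) as <-.
  { apply functional_extensionality; intros x.
    exact (proj1 (arrow_of_ends _ _ (Hmap x x (idm x)))). }
  assert (m1 = m2) as <-.
  { do 3 (apply functional_extensionality_dep; intros).
    apply arrow_of_inj, Hmap. }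
  assert (p1 = p2) as <-.
  { do 2 (apply functional_extensionality_dep; intros).
    now apply Hput. }
  rewrite (proof_irrelevance _ i1 i2), (proof_irrelevance _ k1 k2).
  f_equal; apply proof_irrelevance.
Qed.

Section Pullback.
Context {A B C : Category} (G : Functor C B) (F : Lens A B).

Definition pb_ob : Type := {p : Ob C * Ob A | G (fst p) = F (snd p)}.

Definition pb_fst (P : pb_ob) : Ob C := fst (proj1_sig P).
Definition pb_snd (P : pb_ob) : Ob A := snd (proj1_sig P).

Definition pb_hom (P Q : pb_ob) : Type :=
  {uv : Hom (pb_fst P) (pb_fst Q) * Hom (pb_snd P) (pb_snd Q) |
    arrow_of (fmap G (fst uv)) = arrow_of (fmap F (snd uv))}.

Lemma pb_idm_square (P : pb_ob) :
  arrow_of (fmap G (idm (pb_fst P))) = arrow_of (fmap F (idm (pb_snd P))).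
Proof. rewrite !fmap_id. exact (f_equal (fun b => arrow_of (idm b)) (proj2_sig P)). Qed.

Lemma pb_comp_square (P Q R : pb_ob) (v : pb_hom Q R) (u : pb_hom P Q) :
  arrow_of (fmap G (comp (fst (proj1_sig v)) (fst (proj1_sig u)))) =
  arrow_of (fmap F (comp (snd (proj1_sig v)) (snd (proj1_sig u)))).
Proof. rewrite !fmap_comp. apply arrow_of_comp; [exact (proj2_sig u) | exact (proj2_sig v)]. Qed.

Definition pullback : Category.
Proof.
  refine {| Ob := pb_ob; Hom := pb_hom;
            idm := fun P => exist _ (idm (pb_fst P), idm (pb_snd P)) (pb_idm_square P);
            comp := fun P Q R v u =>
              exist _ (comp (fst (proj1_sig v)) (fst (proj1_sig u)),
                       comp (snd (proj1_sig v)) (snd (proj1_sig u)))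
                    (pb_comp_square P Q R v u) |}.
  - intros P Q [[u v] p]. apply subset_eq_compat. simpl. now rewrite !comp_id_l.
  - intros P Q [[u v] p]. apply subset_eq_compat. simpl. now rewrite !comp_id_r.
  - intros P Q R S [[u v] p] [[u' v'] p'] [[u'' v''] p'']. apply subset_eq_compat. simpl.
    now rewrite !comp_assoc.
Defined.

Definition pb_out1 {P : pb_ob} (X : out_arr pullback P) : out_arr C (pb_fst P) :=
  existT _ (pb_fst (projT1 X)) (fst (proj1_sig (projT2 X))).

Definition pb_out2 {P : pb_ob} (X : out_arr pullback P) : out_arr A (pb_snd P) :=
  existT _ (pb_snd (projT1 X)) (snd (proj1_sig (projT2 X))).

Lemma pb_out_eq {P : pb_ob} (X Y : out_arr pullback P) :
  pb_out1 X = pb_out1 Y -> pb_out2 X = pb_out2 Y -> X = Y.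
Proof.
  destruct X as [[[x1 x2] px] [[u1 u2] pu]], Y as [[[y1 y2] py] [[v1 v2] pv]].
  unfold pb_out1, pb_out2, pb_fst, pb_snd; simpl. intros H1 H2.
  assert (x1 = y1) as <- by exact (f_equal (@projT1 _ _) H1).
  assert (x2 = y2) as <- by exact (f_equal (@projT1 _ _) H2).
  apply inj_pair2 in H1, H2. subst.
  now rewrite (proof_irrelevance _ px py), (proof_irrelevance _ pu pv).
Qed.

Definition pb_out {P : pb_ob} (s : out_arr C (pb_fst P)) (t : out_arr A (pb_snd P))
  (H : arrow_of (fmap G (projT2 s)) = arrow_of (fmap F (projT2 t))) : out_arr pullback P :=
  existT (fun Q : pb_ob => pb_hom P Q)
         (exist _ (projT1 s, projT1 t) (proj2 (arrow_of_ends _ _ H)))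
         (exist _ (projT2 s, projT2 t) H).

Lemma pb_out1_out {P : pb_ob} (s : out_arr C (pb_fst P)) (t : out_arr A (pb_snd P)) H :
  pb_out1 (pb_out s t H) = s.
Proof. now destruct s. Qed.

Lemma pb_out2_out {P : pb_ob} (s : out_arr C (pb_fst P)) (t : out_arr A (pb_snd P)) H :
  pb_out2 (pb_out s t H) = t.
Proof. now destruct t. Qed.

Definition pb_lift (P : pb_ob) (s : out_arr C (pb_fst P)) : out_arr A (pb_snd P) :=
  lput F (pb_snd P) (out_cast (proj2_sig P) (fmap_out G s)).

Lemma pb_lift_square (P : pb_ob) (s : out_arr C (pb_fst P)) :
  arrow_of (fmap G (projT2 s)) = arrow_of (fmap F (projT2 (pb_lift P s))).
Proof.
  change (out_arrow (fmap_out G s) = out_arrow (fmap_out F (pb_lift P s))).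
  unfold pb_lift. now rewrite fmap_out_lput, out_arrow_cast.
Qed.

Definition pb_put (P : pb_ob) (s : out_arr C (pb_fst P)) : out_arr pullback P :=
  pb_out s (pb_lift P s) (pb_lift_square P s).

Definition pb_proj : Functor pullback C.
Proof.
  refine {| fobj := (pb_fst : Ob pullback -> Ob C);
            fmap := fun P Q (u : pb_hom P Q) => fst (proj1_sig u) |};
    reflexivity.
Defined.

Definition pb_lens : Lens pullback C.
Proof.
  refine {| lget := pb_proj; lput := pb_put |}.
  - intros P [y u]. reflexivity.
  - intros P. apply pb_out_eq; [reflexivity |].
    unfold pb_put. rewrite pb_out2_out.
    unfold pb_lift, fmap_out; simpl.
    rewrite fmap_id, out_cast_idm. apply lput_id.
  - intros P s z u. apply pb_out_eq; [reflexivity |].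
    unfold pb_put at 1. rewrite pb_out2_out.
    apply lput_comp_arrow.
    unfold fmap_out. rewrite out_arrow_cast; simpl. rewrite fmap_comp.
    apply arrow_of_comp; [apply pb_lift_square |].
    now rewrite arrow_of_projT2, out_arrow_cast.
Defined.

End Pullback.

Section KernelPair.
Context {A B : Category} (F : Lens A B).

Definition kernel_pair : Category := pullback (lget F) F.

Definition kp_swap_ob (P : Ob kernel_pair) : Ob kernel_pair :=
  exist _ (pb_snd _ _ P, pb_fst _ _ P) (eq_sym (proj2_sig P)).

Definition kp_swap_hom {P Q : Ob kernel_pair} (u : Hom P Q) :
  Hom (kp_swap_ob P) (kp_swap_ob Q) :=
  exist _ (snd (proj1_sig u), fst (proj1_sig u)) (eq_sym (proj2_sig u)).

Definition kp_swap_functor : Functor kernel_pair kernel_pair.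
Proof.
  refine {| fobj := kp_swap_ob; fmap := @kp_swap_hom |};
    intros; apply subset_eq_compat; reflexivity.
Defined.

Definition kp_swap_put (P : Ob kernel_pair) (X : out_arr kernel_pair (kp_swap_ob P)) :
  out_arr kernel_pair P :=
  existT _ (kp_swap_ob (projT1 X)) (kp_swap_hom (projT2 X)).

Lemma kp_swap_out1 (P : Ob kernel_pair) (X : out_arr kernel_pair (kp_swap_ob P)) :
  pb_out1 _ _ (kp_swap_put P X) = pb_out2 _ _ X.
Proof. reflexivity. Qed.

Lemma kp_swap_out2 (P : Ob kernel_pair) (X : out_arr kernel_pair (kp_swap_ob P)) :
  pb_out2 _ _ (kp_swap_put P X) = pb_out1 _ _ X.
Proof. reflexivity. Qed.

Definition kp_swap : Lens kernel_pair kernel_pair.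
Proof.
  refine {| lget := kp_swap_functor; lput := kp_swap_put |}.
  - intros P X. apply pb_out_eq; reflexivity.
  - intros P. apply pb_out_eq; reflexivity.
  - intros P X z u. apply pb_out_eq; reflexivity.
Defined.

Definition kp_proj1 : Lens kernel_pair A := pb_lens (lget F) F.
Definition kp_proj2 : Lens kernel_pair A := lens_comp kp_swap kp_proj1.

Lemma kp_lift_lput (P : Ob kernel_pair) (c : out_arr B (F (pb_fst _ _ P))) :
  pb_lift _ _ P (lput F (pb_fst _ _ P) c) = lput F (pb_snd _ _ P) (out_cast (proj2_sig P) c).
Proof. unfold pb_lift. now rewrite fmap_out_lput. Qed.

Lemma kernel_pair_square : lens_comp kp_proj1 F = lens_comp kp_proj2 F.
Proof.
  apply lens_eq.
  - intros P Q u. exact (proj2_sig u).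
  - intros P c1 c2 H. simpl in *. apply pb_out_eq.
    + unfold pb_put. rewrite pb_out1_out, kp_swap_out1, pb_out2_out, kp_lift_lput.
      f_equal. apply out_arrow_inj. now rewrite out_arrow_cast.
    + unfold pb_put. rewrite pb_out2_out, kp_swap_out2, pb_out1_out, kp_lift_lput.
      f_equal. apply out_arrow_inj. now rewrite out_arrow_cast.
Qed.

Lemma lens_mono_inj_ob : lens_mono F -> forall a1 a2 : Ob A, F a1 = F a2 -> a1 = a2.
Proof.
  intros Hmono a1 a2 e.
  pose proof (Hmono _ _ _ kernel_pair_square) as Hproj.
  exact (f_equal (fun L : Lens kernel_pair A => L (exist _ (a1, a2) e : Ob kernel_pair)) Hproj).
Qed.

Lemma lens_mono_lput_fmap : lens_mono F ->
  forall (a : Ob A) (s : out_arr A a), lput F a (fmap_out F s) = s.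
Proof.
  intros Hmono a s.
  pose proof (Hmono _ _ _ kernel_pair_square) as Hproj.
  set (t := lput F a (fmap_out F s)).
  assert (Hst : arrow_of (fmap F (projT2 s)) = arrow_of (fmap F (projT2 t))).
  { change (out_arrow (fmap_out F s) = out_arrow (fmap_out F t)).
    unfold t. now rewrite fmap_out_lput. }
  pose (w := pb_out (lget F) F (P := exist _ (a, a) eq_refl) s t Hst).
  pose proof (f_equal (fun L : Lens kernel_pair A => arrow_of (fmap L (projT2 w))) Hproj) as Hw.
  symmetry. apply out_arrow_inj. rewrite <- !arrow_of_projT2. exact Hw.
Qed.

End KernelPair.

Section Elements.
Context {B : Category} (P : Ob B -> Type) (act : forall b b', Hom b b' -> P b -> P b').
Hypothesis act_id : forall b p, act b b (idm b) p = p.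
Hypothesis act_comp : forall b b' b'' (f : Hom b b') (g : Hom b' b'') p,
  act b b'' (comp g f) p = act b' b'' g (act b b' f p).

Definition el_hom (x y : {b : Ob B & P b}) : Type :=
  {f : Hom (projT1 x) (projT1 y) | projT2 y = act _ _ f (projT2 x)}.

Lemma el_comp_act (x y z : {b : Ob B & P b}) (g : el_hom y z) (f : el_hom x y) :
  projT2 z = act _ _ (comp (proj1_sig g) (proj1_sig f)) (projT2 x).
Proof. rewrite act_comp, <- (proj2_sig f). exact (proj2_sig g). Qed.

Definition elements : Category.
Proof.
  refine {| Ob := {b : Ob B & P b}; Hom := el_hom;
            idm := fun x => exist _ (idm (projT1 x)) (eq_sym (act_id _ _));
            comp := fun x y z g f =>
              exist _ (comp (proj1_sig g) (proj1_sig f)) (el_comp_act x y z g f) |}.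
  - intros x y [f p]. apply subset_eq_compat. apply comp_id_l.
  - intros x y [f p]. apply subset_eq_compat. apply comp_id_r.
  - intros x y z w [f p] [g q] [h r]. apply subset_eq_compat. apply comp_assoc.
Defined.

Lemma elements_arrow_eq {b b' : Ob B} (f : Hom b b') (p1 p2 : P b) (q1 q2 : P b') h1 h2 :
  p1 = p2 -> q1 = q2 ->
  @arrow_of elements (existT _ b p1) (existT _ b' q1) (exist _ f h1) =
  @arrow_of elements (existT _ b p2) (existT _ b' q2) (exist _ f h2).
Proof. intros <- <-. now rewrite (proof_irrelevance _ h1 h2). Qed.

Definition el_arrow_base (r : arrow elements) : arrow B :=
  arrow_of (proj1_sig (projT2 (projT2 r))).

Section GlobalElement.
Context (t : forall b, P b).
Hypothesis t_nat : forall b b' (f : Hom b b'), act b b' f (t b) = t b'.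

Definition section_functor : Functor B elements.
Proof.
  refine {| fobj := fun b => existT P b (t b) : Ob elements;
            fmap := fun b b' f => exist _ f (eq_sym (t_nat b b' f)) |};
    intros; now apply subset_eq_compat.
Defined.

Definition section_put (b : Ob B) (c : out_arr elements (section_functor b)) : out_arr B b :=
  existT _ (projT1 (projT1 c)) (proj1_sig (projT2 c)).

Definition section_lens : Lens B elements.
Proof.
  refine {| lget := section_functor; lput := section_put |}.
  - intros b [[b' p] [f q]]. simpl in *. destruct (eq_sym (eq_trans q (t_nat b b' f))).
    f_equal. now apply subset_eq_compat.
  - reflexivity.
  - reflexivity.
Defined.

End GlobalElement.

Lemma lens_comp_section_eq {A : Category} (F : Lens A B) (t1 t2 : forall b, P b)
  (t1_nat : forall b b' (f : Hom b b'), act b b' f (t1 b) = t1 b')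
  (t2_nat : forall b b' (f : Hom b b'), act b b' f (t2 b) = t2 b') :
  (forall a, t1 (F a) = t2 (F a)) ->
  lens_comp F (section_lens t1 t1_nat) = lens_comp F (section_lens t2 t2_nat).
Proof.
  intros Hagree. apply lens_eq.
  - intros x y f. apply elements_arrow_eq; apply Hagree.
  - intros a c1 c2 H. simpl. f_equal. apply out_arrow_inj.
    exact (f_equal el_arrow_base H).
Qed.

End Elements.

Section Image.
Context {A B : Category} (F : Lens A B).

Definition in_image (b : Ob B) : Prop := exists a, F a = b.

Lemma in_image_closed (b b' : Ob B) : Hom b b' -> in_image b -> in_image b'.
Proof.
  intros f [a <-].
  exists (projT1 (lput F a (existT _ b' f))).
  exact (f_equal (@projT1 _ _) (lput_get F a (existT _ b' f))).
Qed.

Definition image_indicator (b : Ob B) : bool :=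
  if excluded_middle_informative (in_image b) then true else false.

Lemma image_indicatorP (b : Ob B) : image_indicator b = true <-> in_image b.
Proof. unfold image_indicator. destruct excluded_middle_informative; intuition discriminate. Qed.

Lemma image_indicator_closed (b b' : Ob B) :
  Hom b b' -> image_indicator b = true -> image_indicator b' = true.
Proof. intros f. rewrite !image_indicatorP. now apply in_image_closed. Qed.

Definition image_act (b b' : Ob B) (_ : Hom b b') (s : bool) : bool :=
  s && implb (image_indicator b') (image_indicator b).

Lemma image_act_id (b : Ob B) (s : bool) : image_act b b (idm b) s = s.
Proof. unfold image_act. destruct s, image_indicator; reflexivity. Qed.

Lemma image_act_comp b b' b'' (f : Hom b b') (g : Hom b' b'') s :
  image_act b b'' (comp g f) s = image_act b' b'' g (image_act b b' f s).
Proof.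
  unfold image_act.
  destruct (image_indicator b) eqn:Hb.
  - rewrite (image_indicator_closed _ _ f Hb), (image_indicator_closed _ _ (comp g f) Hb).
    now destruct s.
  - destruct (image_indicator b') eqn:Hb'.
    + rewrite (image_indicator_closed _ _ g Hb'). now destruct s.
    + now destruct s, (image_indicator b'').
Qed.

Lemma outside_image_nat b b' (f : Hom b b') :
  image_act b b' f (negb (image_indicator b)) = negb (image_indicator b').
Proof.
  unfold image_act. destruct (image_indicator b) eqn:Hb.
  - now rewrite (image_indicator_closed _ _ f Hb).
  - now destruct (image_indicator b').
Qed.

Lemma const_false_nat b b' (f : Hom b b') : image_act b b' f false = false.
Proof. reflexivity. Qed.

Lemma lens_epi_surj : lens_epi F -> forall b : Ob B, exists a, F a = b.
Proof.
  intros Hepi b.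
  assert (Hsec : section_lens _ _ image_act_id image_act_comp _ outside_image_nat =
                 section_lens _ _ image_act_id image_act_comp _ const_false_nat).
  { apply Hepi, lens_comp_section_eq.
    intros a. cbn. apply negb_false_iff, image_indicatorP. now exists a. }
  apply image_indicatorP, negb_false_iff.
  exact (f_equal (fun L : Lens B (elements _ _ image_act_id image_act_comp) =>
                    projT2 (fobj L b : {_ : Ob B & bool})) Hsec).
Qed.

End Image.

Section Inverse.
Context {A B : Category} (F : Lens A B).
Hypothesis F_inj : forall a1 a2, F a1 = F a2 -> a1 = a2.
Hypothesis F_surj : forall b, exists a, F a = b.
Hypothesis lput_fmap : forall a (s : out_arr A a), lput F a (fmap_out F s) = s.

Definition inv_ob (b : Ob B) : Ob A :=
  proj1_sig (constructive_indefinite_description _ (F_surj b)).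

Lemma F_inv_ob (b : Ob B) : F (inv_ob b) = b.
Proof. exact (proj2_sig (constructive_indefinite_description _ (F_surj b))). Qed.

Lemma inv_ob_F (a : Ob A) : inv_ob (F a) = a.
Proof. apply F_inj, F_inv_ob. Qed.

Definition inv_lift {b : Ob B} (s : out_arr B b) : out_arr A (inv_ob b) :=
  lput F (inv_ob b) (out_cast (eq_sym (F_inv_ob b)) s).

Lemma out_arrow_fmap_inv_lift {b : Ob B} (s : out_arr B b) :
  out_arrow (fmap_out F (inv_lift s)) = out_arrow s.
Proof. unfold inv_lift. now rewrite fmap_out_lput, out_arrow_cast. Qed.

Lemma out_arrow_inv_lift_fmap {a : Ob A} (s : out_arr A a) :
  out_arrow (inv_lift (fmap_out F s)) = out_arrow s.
Proof.
  unfold inv_lift. rewrite <- (lput_fmap a s) at 2.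
  apply lput_arrow; [apply inv_ob_F | apply out_arrow_cast].
Qed.

Lemma F_inv_lift_cod {b : Ob B} (s : out_arr B b) : F (projT1 (inv_lift s)) = projT1 s.
Proof. exact (f_equal (fun r : arrow B => projT1 (projT2 r)) (out_arrow_fmap_inv_lift s)). Qed.

Lemma inv_lift_cod {b : Ob B} (s : out_arr B b) : projT1 (inv_lift s) = inv_ob (projT1 s).
Proof. apply F_inj. now rewrite F_inv_ob, F_inv_lift_cod. Qed.

Definition inv_map {b b' : Ob B} (f : Hom b b') : Hom (inv_ob b) (inv_ob b') :=
  eq_rect _ (Hom (inv_ob b)) (projT2 (inv_lift (existT _ b' f))) _
          (inv_lift_cod (existT _ b' f)).

Lemma arrow_of_inv_map {b b' : Ob B} (f : Hom b b') :
  arrow_of (inv_map f) = out_arrow (inv_lift (existT _ b' f)).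
Proof. unfold inv_map. now rewrite arrow_of_cast_cod, arrow_of_projT2. Qed.

Lemma arrow_of_fmap_inv_map {b b' : Ob B} (f : Hom b b') :
  arrow_of (fmap F (inv_map f)) = arrow_of f.
Proof.
  rewrite (arrow_of_fmap F _ (projT2 (inv_lift (existT _ b' f)))).
  - apply out_arrow_fmap_inv_lift.
  - now rewrite arrow_of_inv_map, arrow_of_projT2.
Qed.

Lemma inv_map_comp {x y z : Ob B} (f : Hom x y) (g : Hom y z) :
  arrow_of (inv_map (comp g f)) = arrow_of (comp (inv_map g) (inv_map f)).
Proof.
  pose (e := out_cast (eq_sym (F_inv_lift_cod (existT _ y f))) (existT _ z g)).
  rewrite arrow_of_inv_map. unfold inv_lift at 1.
  rewrite (lput_comp_arrow F (inv_ob x) (out_cast (eq_sym (F_inv_ob x)) (existT _ y f)) _ e).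
  - apply arrow_of_comp.
    + now rewrite arrow_of_inv_map, arrow_of_projT2.
    + rewrite arrow_of_inv_map, arrow_of_projT2.
      apply lput_arrow; [apply inv_lift_cod | unfold e; now rewrite !out_arrow_cast].
  - rewrite out_arrow_cast. apply arrow_of_comp.
    + symmetry. apply out_arrow_fmap_inv_lift.
    + unfold e. now rewrite arrow_of_projT2, out_arrow_cast.
Qed.

Definition inv_functor : Functor B A.
Proof.
  refine {| fobj := inv_ob; fmap := @inv_map |}.
  - intros b. apply arrow_of_inj. rewrite arrow_of_inv_map.
    unfold inv_lift. now rewrite out_cast_idm, lput_id.
  - intros x y z f g. apply arrow_of_inj, inv_map_comp.
Defined.

Definition inv_put (b : Ob B) (s : out_arr A (inv_ob b)) : out_arr B b :=
  out_cast (F_inv_ob b) (fmap_out F s).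

Lemma inv_lift_put (b : Ob B) (s : out_arr A (inv_ob b)) : inv_lift (inv_put b s) = s.
Proof.
  rewrite <- (lput_fmap _ s) at 2. unfold inv_lift, inv_put. f_equal.
  apply out_arrow_inj. now rewrite !out_arrow_cast.
Qed.

Definition inv_lens : Lens B A.
Proof.
  refine {| lget := inv_functor; lput := inv_put |}.
  - intros b s. apply out_arrow_inj. simpl.
    change (arrow_of (inv_map (projT2 (inv_put b s))) = out_arrow s).
    now rewrite arrow_of_inv_map, sig_eta, inv_lift_put.
  - intros b. unfold inv_put, fmap_out; simpl. rewrite fmap_id. apply out_cast_idm.
  - intros b s z u. apply out_arrow_inj.
    unfold inv_put at 1. rewrite out_arrow_cast, out_arrow_fmap_out, <- arrow_of_projT2.
    simpl. rewrite fmap_comp.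
    apply arrow_of_comp.
    + rewrite arrow_of_fmap_inv_map, arrow_of_projT2.
      unfold inv_put. now rewrite out_arrow_cast.
    + rewrite arrow_of_projT2. unfold inv_put. now rewrite out_arrow_cast.
Defined.

Lemma lens_comp_inv_r : lens_comp F inv_lens = lens_id A.
Proof.
  apply lens_eq.
  - intros x y f. simpl. rewrite arrow_of_inv_map.
    exact (out_arrow_inv_lift_fmap (existT _ y f)).
  - intros a c1 c2 H. apply out_arrow_inj. etransitivity; [| exact H]. simpl.
    transitivity (out_arrow (lput F (inv_ob (F a)) (fmap_out F c1))).
    + apply lput_arrow; [symmetry; apply inv_ob_F | apply out_arrow_cast].
    + now rewrite lput_fmap.
Qed.

Lemma lens_comp_inv_l : lens_comp inv_lens F = lens_id B.
Proof.
  apply lens_eq.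
  - intros x y f. apply arrow_of_fmap_inv_map.
  - intros b c1 c2 H. apply out_arrow_inj. simpl.
    unfold inv_put. now rewrite out_arrow_cast, fmap_out_lput.
Qed.

Lemma lens_iso_of_bijective : lens_iso F.
Proof. exists inv_lens. split; [apply lens_comp_inv_r | apply lens_comp_inv_l]. Qed.

End Inverse.

Theorem corollary5p9 (A B : Category) (F : Lens A B) :
  lens_epi F -> lens_mono F -> lens_iso F.
Proof.
  intros Hepi Hmono.
  apply lens_iso_of_bijective.
  - exact (lens_mono_inj_ob F Hmono).
  - exact (lens_epi_surj F Hepi).
  - exact (lens_mono_lput_fmap F Hmono).
Qed.
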